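(* Let $i(C,R)$ be an initial rule and $\mathrm{H}:=\mathrm{H}(\mathbf{G}(i(C,R)))$. If $\mathrm{H}'$ is a fracturable subset of $\mathrm{H}$ (in $\mathsf{DG}(\mathrm H)$), then $i(C,R)\preceq\ \triangleright^{1} i(C,R)\ominus\mathbf{G}(\mathrm{H}')\ \triangleright^{0}\mathrm{H}'$; i.e. every conclusion of $i(C,R)$ can be derived by one application of $i(C,R)\ominus\mathbf G(\mathrm H')$ followed by zero or more applications of rules from $\mathrm H'$.
   Context: Fix a countably infinite set $\mathtt{S}$ of sequents (atomic labels), a set $\mathcal{U}$ of vertices, and a non-empty finite set $\mathtt{E}$ of edge types. A g-sequent is $\mathcal{G}=(\mathcal{V},\mathcal{E},\mathcal{L})$ with $\mathcal{V}\subseteq\mathcal{U}$, $\mathcal{E}=\{\mathcal{E}_a\mid a\in\mathtt{E}\}$, $\mathcal{E}_a\subseteq\mathcal{V}\times\mathcal{V}$, $\mathcal{L}:\mathcal{V}\to\mathtt{S}$; written $\Gamma\vdash\Delta$ with $\Gamma$ the set of edge atoms $w\mathcal{E}_a u$ and $\Delta$ the set of prefixed sequents $w:S$; $\mathtt{PS}=\mathcal U\times\mathtt S$; commas denote disjoint union. Let $\overline{\mathtt E}=\{\bar a\mid a\in\mathtt E\}$, $\bar{\bar z}=z$, $\overline{x_1\cdots x_n}=\bar x_n\cdots\bar x_1$, $\varepsilon$ empty string. Paths: $\mathcal{G}\models u\xrightarrow{a}w$ iff $(u,w)\in\mathcal{E}_a$; $u\xrightarrow{\bar a}w$ iff $(w,u)\in\mathcal{E}_a$;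 $u\xrightarrow{\varepsilon}w$ iff $u=w$; $u\xrightarrow{xs}w$ iff some $v$ has $u\xrightarrow{x}v$, $v\xrightarrow{s}w$; $u\xrightarrow{\mathscr L}w$ iff $u\xrightarrow{s}w$ for some $s\in\mathscr L$. An $\mathtt E$-system is a finite set $\mathbf G$ of production rules $x\longrightarrow t$ ($x\in\mathtt E\cup\overline{\mathtt E}$) with $x\longrightarrow t\in\mathbf G$ iff $\bar x\longrightarrow\bar t\in\mathbf G$; $\mathbf G(s)=\{t\mid s\longrightarrow^*_{\mathbf G}t\}$. For $p=x\longrightarrow t$, $\bar p=\bar x\longrightarrow\bar t$; $(p,\bar p)$ is a production pair; $P(\mathbf G)$ the set of such pairs. A constraint is a finite tree $C=(V,E,L)$, $V\subseteq\mathcal U$, each edge labelled $L(w,u)=\mathbf G'(a)$ ($a\in\mathtt E$, $\mathbf G'$ an $\mathtt E$-system, said to participate in $C$); $\mathcal G$ satisfies $C$ iff $V\subseteq\mathcal U(\mathcal G)$ and $\mathcal G\models w\xrightarrow{\mathbf G'(a)}u$ for each edge. A sequent constraint $R\subseteq\mathtt S^n\times 2^{\mathtt{PS}}$ is satisfied by $S_1,\dots,S_n,\Delta$ iff $(S_{\pi(1)},\dots,S_{\pi(n)},\Delta)\in R$ for some permutation $\pi$. An initial rule $i(C,R)$ has no premises; its conclusions are the $\Gamma\vdash\Delta=(\mathcal V,\mathcal E,\mathcal L)$ satisfying $C$, with $V=\{w_1,\dots,w_n\}$, such that $\mathcal L(w_1),\dots,\mathcal L(w_n)$ and $\Delta\setminus\{w_i:\mathcal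 L(w_i)\}$ satisfy $R$. $\mathbf G(i(C,R))$ is the union of all $\mathtt E$-systems participating in $C$. Fracture: $C\ominus\mathbf G$ replaces each label $\mathbf G'(a)$ by $(\mathbf G'\setminus\mathbf G)(a)$, and $i(C,R)\ominus\mathbf G=i(C\ominus\mathbf G,R)$. Horn rules: for $s=x_1\cdots x_n$, $w\mathcal E_s u$ abbreviates atoms $w\mathcal E_{x_1}v_1,\dots,v_{n-1}\mathcal E_{x_n}u$ ($v\mathcal E_{\bar a}z$ means $z\mathcal E_a v$; $w\mathcal E_\varepsilon u$ means $w=u$). Forward Horn rule $h_f$: premise $\Gamma,w\mathcal{E}_s u,w\mathcal{E}_a u\vdash\Delta$, conclusion $\Gamma,w\mathcal{E}_s u\vdash\Delta$; backward $h_b$: same with $u\mathcal E_a w$ instead of $w\mathcal E_a u$. $\mathbf{G}(h_f)=\{a\longrightarrow s,\bar a\longrightarrow\bar s\}$, $\mathbf{G}(h_b)=\{\bar a\longrightarrow s,a\longrightarrow\bar s\}$, $\mathbf G(\mathrm H)=\bigcup_{h\in\mathrm H}\mathbf G(h)$. For a pair $(p,\bar p)$ with $p=a\longrightarrow s$ (resp. $\bar a\longrightarrow s$), $a\in\mathtt E$, $\mathrm H(p,\bar p)$ is the corresponding forward (resp. backward) Horn rule; $\mathrm H(\mathbf G)=\bigcup_{(p,\bar p)\in P(\mathbf G)}\mathrm H(p,\bar p)$. Dependency graph: for distinct pairs with $p=x\longrightarrow s$, $p'=y\longrightarrow t$, $(p,\bar p)\sqsubset(p',\bar p')$ iff $s$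 or $\bar s$ contains $y$; $\sqsubseteq$ its reflexive-transitive closure; $\mathsf{DG}(\mathrm H)=(\mathrm H,\sqsubseteq')$ with $h\sqsubseteq'h'$ iff the production pair of $h$ is $\sqsubseteq$ that of $h'$. $V'\subseteq V$ is fracturable in $(V,\sqsubseteq)$ iff no $v\in V'$, $v'\in V\setminus V'$ have $v\sqsubseteq v'$. Simulation: $\mathrm R_1\preceq\mathrm R_2$ iff whatever is derivable from given g-sequents using $\mathrm R_1$ is derivable from them using $\mathrm R_2$. An ordered rule set $\triangleright^{i_1}\mathrm R_1\cdots\triangleright^{i_k}\mathrm R_k$ ($i_j\in\{0,1\}$) is $\mathrm R_1\cup\dots\cup\mathrm R_k$ restricted to derivations that (top to bottom) first apply at least $i_1$ rules from $\mathrm R_1$, then at least $i_2$ rules from $\mathrm R_2$, etc. *)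

From HB Require Import structures.
From mathcomp Require Import all_boot.
From mathcomp Require Import finmap.
From Stdlib Require Import Relations.Relation_Operators.

Set Implicit Arguments.
Unset Strict Implicit.
Unset Printing Implicit Defensive.

Local Open Scope fset_scope.

Section GSeq.
Variables (E : finType) (U : eqType) (S : countType).

(** Letters of E ∪ Ē : (a, false) is a, (a, true) is ā. *)
Definition letter := (E * bool)%type.
Definition barl (x : letter) : letter := (x.1, ~~ x.2).
Definition bars (s : seq letter) : seq letter := rev (map barl s).

Definition prod := (letter * seq letter)%type.
Definition barp (p : prod) : prod := (barl p.1, bars p.2).
Definition esystem (G : {fset prod}) : Prop :=
  forall x t, ((x, t) \in G) = ((barl x, bars t) \in G).

Definition srew (G : {fset prod}) (s t : seq letter) : Prop :=
  exists s1 s2 x r, (x, r) \in G /\ s = s1 ++ x :: s2 /\ t = s1 ++ r ++ s2.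
Definition sderiv (G : {fset prod}) : seq letter -> seq letter -> Prop :=
  clos_refl_trans (seq letter) (srew G).

(** g-sequents (V, {E_a}, L); L is total but only meaningful on V. *)
Record gseq := GSeq {
  gV : U -> Prop;
  gE : E -> U -> U -> Prop;
  gL : U -> S }.

Definition gwf (G : gseq) : Prop :=
  forall a w u, gE G a w u -> gV G w /\ gV G u.

Definition gDelta (G : gseq) : U * S -> Prop :=
  fun ws => gV G ws.1 /\ ws.2 = gL G ws.1.

Definition gstep (G : gseq) (x : letter) (u w : U) : Prop :=
  if x.2 then gE G x.1 w u else gE G x.1 u w.
Fixpoint gpath (G : gseq) (u : U) (s : seq letter) (w : U) : Prop :=
  match s with
  | [::] => u = w
  | x :: s' => exists v, gstep G x u v /\ gpath G v s' w
  end.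

(** Constraints: a finite tree whose edges (w,u) are labelled by G'(a),
    stored as (w, u, (G', a)). *)
Record constraint := Constraint {
  cV : seq U;
  cE : seq (U * U * ({fset prod} * E)) }.

Definition cends (e : U * U * ({fset prod} * E)) : U * U := e.1.
Definition same_ends (e1 e2 : U * U * ({fset prod} * E)) : bool :=
  (cends e1 == cends e2) || (cends e1 == ((cends e2).2, (cends e2).1)).

Definition cadj (C : constraint) (x y : U) : Prop :=
  exists2 e, e \in cE C & cends e = (x, y) \/ cends e = (y, x).

Definition is_tree (C : constraint) : Prop :=
  [/\ uniq (cV C), 0 < size (cV C), 
      (forall e, e \in cE C ->
         [/\ (cends e).1 \in cV C, (cends e).2 \in cV C & (cends e).1 != (cends e).2]),
      pairwise (fun e1 e2 => ~~ same_ends e1 e2) (cE C) &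
      size (cE C) = (size (cV C)).-1] /\
      (forall x y, x \in cV C -> y \in cV C -> clos_refl_trans U (cadj C) x y).

Definition is_constraint (C : constraint) : Prop :=
  is_tree C /\ (forall e, e \in cE C -> esystem e.2.1).

Definition csat (C : constraint) (G : gseq) : Prop :=
  (forall w, w \in cV C -> gV G w) /\
  (forall e, e \in cE C ->
     exists2 t, sderiv e.2.1 [:: (e.2.2, false)] t & gpath G e.1.1 t e.1.2).

(** Sequent constraints R ⊆ S^n × 2^PS (the S^n component given as a list),
    and conclusions of the initial rule i(C,R). *)
Definition seqconstr := seq S -> (U * S -> Prop) -> Prop.

Definition init_concl (C : constraint) (R : seqconstr) (G : gseq) : Prop :=
  [/\ gwf G, csat C G &
      exists2 l, perm_eq l [seq gL G w | w <- cV C] &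
        R l (fun ws => gDelta G ws /\ ~ (exists2 w, w \in cV C & ws = (w, gL G w)))].

Definition Gi (C : constraint) : {fset prod} :=
  foldr (fun e acc => e.2.1 `|` acc) fset0 (cE C).

Definition fracture (C : constraint) (G : {fset prod}) : constraint :=
  Constraint (cV C) [seq (e.1, (e.2.1 `\` G, e.2.2)) | e <- cE C].

(** Horn rules.  A Horn rule is represented canonically as a forward Horn
    rule h_f(a,s) = (a, s); the backward rule h_b(a,s) coincides (as a rule)
    with h_f(a, bars s). *)
Definition hrule := (E * seq letter)%type.

Definition hprod (h : hrule) : prod := ((h.1, false), h.2).

(** One application of h_f(a,s): premise P = Γ, wE_s u, wE_a u ⊢ Δ,
    conclusion Q = Γ, wE_s u ⊢ Δ (disjoint union: wE_a u is not in Q). *)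
Definition horn_app (h : hrule) (P Q : gseq) : Prop :=
  [/\ gwf P, gwf Q,
      (forall x, gV P x <-> gV Q x),
      (forall x, gL P x = gL Q x) &
      exists w u,
        [/\ gpath Q w h.2 u, ~ gE Q h.1 w u &
            forall b x y, gE P b x y <-> (gE Q b x y \/ (b = h.1 /\ x = w /\ y = u))]].

(** H(p, p̄) for a production p: forward rule if the head is unbarred,
    backward rule h_b(a,s) = h_f(a, s̄) if the head is ā. *)
Definition hrule_of (p : prod) : hrule :=
  if p.1.2 then (p.1.1, bars p.2) else (p.1.1, p.2).

Definition inH (G : {fset prod}) (h : hrule) : Prop :=
  exists2 p, p \in G & hrule_of p = h.

Definition GH (H' : {fset hrule}) : {fset prod} :=
  [fset hprod h | h in H'] `|` [fset barp (hprod h) | h in H'].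

Definition hdep (h h' : hrule) : Prop :=
  h <> h' /\ ((hprod h').1 \in (hprod h).2 \/ (hprod h').1 \in bars (hprod h).2).

Definition hle (G : {fset prod}) : hrule -> hrule -> Prop :=
  clos_refl_trans hrule (fun h h' => [/\ inH G h, inH G h' & hdep h h']).

Definition fracturable (G : {fset prod}) (H' : {fset hrule}) : Prop :=
  (forall h, h \in H' -> inH G h) /\
  (forall v v', v \in H' -> inH G v' -> v' \notin H' -> ~ hle G v v').

Definition horn_step (H' : {fset hrule}) (P Q : gseq) : Prop :=
  exists2 h, h \in H' & horn_app h P Q.

End GSeq.

From HB Require Import structures.
From mathcomp Require Import all_boot.
From mathcomp Require Import finmap.
From Stdlib Require Import Relations.Relation_Operators Relations.Operators_Properties.
From Stdlib Require Import Classical.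

(** Let G' be a system participating in C and K = G(H') for a fracturable H'.
    Fracturability makes K "inert" inside G(i(C,R)): no production outside K
    rewrites a letter produced by a production of K.  Hence a derivation
    a -->*_{G'} t can be replayed with G' \ K: each use of a K-production
    x --> r is simply skipped, since the letters of r are never rewritten
    afterwards, and the x-edge it would have produced in the g-sequent is
    instead obtained from the r-path by one bottom-up application of the Horn
    rule H(x --> r) ∈ H'.  Doing this for every edge of C turns a conclusion
    of i(C,R) into a g-sequent with more edges that satisfies C ⊖ G(H') and
    derives the original conclusion by rules of H'. *)

Set Implicit Arguments.
Unset Strict Implicit.
Unset Printing Implicit Defensive.
Local Open Scope fset_scope.

Section Strings.
Variable E : finType.

Lemma barlK : involutive (@barl E).
Proof. by case=> a b; rewrite /barl /= negbK. Qed.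

Lemma barsK : involutive (@bars E).
Proof.
move=> s; rewrite /bars map_rev revK -map_comp.
by rewrite (eq_map barlK) map_id.
Qed.

(** If a letter occurs in s, its unbarred version occurs in s or in s̄;
    this is how the dependency relation sees occurrences of barred letters. *)
Lemma mem_unbarred (z : letter E) s :
  z \in s -> (z.1, false) \in s \/ (z.1, false) \in bars s.
Proof.
case: z => a [] zs; [right | by left].
by rewrite /bars mem_rev; apply/mapP; exists (a, true).
Qed.

End Strings.

Section Paths.
Variables (E : finType) (U : eqType) (S : countType).
Implicit Types (G : gseq E U S) (s : seq (letter E)).

Lemma gpath_cat G w s1 s2 u :
  gpath G w (s1 ++ s2) u <-> exists v, gpath G w s1 v /\ gpath G v s2 u.
Proof.
elim: s1 w => [|x s1 IH] w /=.
  by split; [exists w | case=> v [-> ]].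
split.
  by case=> v [xwv /IH [v' [p1 p2]]]; exists v'; split=> //; exists v.
by case=> v' [[v [xwv p1]] p2]; exists v; split=> //; apply/IH; exists v'.
Qed.

Lemma gstep_bar G x v u : gstep G (barl x) u v <-> gstep G x v u.
Proof. by case: x => a []. Qed.

Lemma gpath_bars G w s u : gpath G w s u -> gpath G u (bars s) w.
Proof.
elim: s w => [|x s IH] w /=; first by move=> ->.
case=> v [xwv p]; rewrite /bars /= rev_cons -cats1.
apply/gpath_cat; exists v; split; first exact: IH.
by exists w; split=> //; apply/gstep_bar.
Qed.

Lemma gpath_sub G G' :
  (forall b x y, gE G b x y -> gE G' b x y) ->
  forall w s u, gpath G w s u -> gpath G' w s u.
Proof.
move=> sub w s; elim: s w => [|x s IH] w u //=.
case=> v [xwv p]; exists v; split; last exact: IH.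
by move: xwv; rewrite /gstep; case: (x.2); apply: sub.
Qed.

Lemma gpath_V G : gwf G -> forall w s u, gpath G w s u -> gV G w -> gV G u.
Proof.
move=> wfG w s; elim: s w => [|x s IH] w u /=; first by move=> ->.
case=> v [xwv p] Vw; apply: (IH v) => //.
by move: xwv; rewrite /gstep; case: (x.2) => /wfG [].
Qed.

End Paths.

Section Rewriting.
Variables (E : finType) (K : {fset prod E}).
Implicit Types s t : seq (letter E).

Lemma sderiv_congr (f : seq (letter E) -> seq (letter E)) :
  (forall s t, srew K s t -> srew K (f s) (f t)) ->
  forall s t, sderiv K s t -> sderiv K (f s) (f t).
Proof.
move=> fK s t; elim=> [x y /fK | x | x y z _ IH1 _ IH2];
  [exact: rt_step | exact: rt_refl | exact: rt_trans IH1 IH2].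
Qed.

Lemma sderiv_cat s1 t1 s2 t2 :
  sderiv K s1 t1 -> sderiv K s2 t2 -> sderiv K (s1 ++ s2) (t1 ++ t2).
Proof.
move=> d1 d2; apply: rt_trans (_ : sderiv K (s1 ++ s2) (t1 ++ s2)) _.
  apply: (sderiv_congr (f := fun s => s ++ s2)) d1 => _ _ [l [r [x [y [xy [-> ->]]]]]].
  by exists l, (r ++ s2), x, y; rewrite -!catA.
apply: (sderiv_congr (f := cat t1)) d2 => _ _ [l [r [x [y [xy [-> ->]]]]]].
by exists (t1 ++ l), r, x, y; rewrite -!catA.
Qed.

Lemma cat_cons_split (T : eqType) (l : seq T) x r B D :
  l ++ x :: r = B ++ D -> x \notin B -> exists D1, D = D1 ++ x :: r /\ l = B ++ D1.
Proof.
elim: B l => [|b B IH] l /=; first by move=> <-; exists l.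
case: l => [|y l] /=; first by case=> -> _; rewrite inE eqxx.
case=> -> /IH + /norP[_] => /[apply] -[D1 [-> ->]]; by exists D1.
Qed.

Lemma cat3_cons_split (T : eqType) (l : seq T) x r A B D :
  l ++ x :: r = A ++ B ++ D -> x \notin B ->
  (exists A2, A = l ++ x :: A2 /\ r = A2 ++ B ++ D) \/
  (exists D1, D = D1 ++ x :: r /\ l = A ++ B ++ D1).
Proof.
elim: A l => [|a A IH] l /=; first by move=> /cat_cons_split /[apply]; right.
case: l => [|y l] /=; first by case=> -> ->; left; exists A.
case=> -> /IH /[apply] -[[A2 [-> ->]] | [D1 [-> ->]]];
  by [left; exists A2 | right; exists D1].
Qed.

Lemma sderiv_frozen r :
  (forall p, p \in K -> p.1 \notin r) ->
  forall A B t, sderiv K (A ++ r ++ B) t ->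
  exists tA tB, [/\ t = tA ++ r ++ tB, sderiv K A tA & sderiv K B tB].
Proof.
move=> frozen A B t; move def_s: (A ++ r ++ B) => s d.
elim: d A B def_s => [s1 t1 [l [l' [x [y [xy [Es ->]]]]]] | s1 | s1 s2 s3 _ IH1 _ IH2]
  A B def_s.
- rewrite -def_s in Es.
  case: (cat3_cons_split (esym Es) (frozen _ xy)) => [[A2 [-> ->]] | [D1 [-> ->]]].
    exists (l ++ y ++ A2), B; split; [by rewrite -!catA | | exact: rt_refl].
    by apply: rt_step; exists l, A2, x, y; split=> //; rewrite -!catA.
  exists A, (D1 ++ y ++ l'); split; [by rewrite -!catA | exact: rt_refl |].
  by apply: rt_step; exists D1, l', x, y.
- by exists A, B; split=> //; exact: rt_refl.
- case: (IH1 A B def_s) => [A1 [B1 [E1 dA1 dB1]]].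
  case: (IH2 A1 B1 (esym E1)) => [A2 [B2 [E2 dA2 dB2]]].
  by exists A2, B2; split=> //; apply: rt_trans; eassumption.
Qed.

End Rewriting.

Section Refinement.
Variables (E : finType) (U : eqType) (S : countType) (H' : {fset hrule E}).
Implicit Types P Q : gseq E U S.

Definition refines P Q : Prop :=
  [/\ gwf P, gV P = gV Q, gL P = gL Q,
      (forall b x y, gE Q b x y -> gE P b x y) &
      clos_refl_trans _ (horn_step H') P Q].

Lemma refines_refl Q : gwf Q -> refines Q Q.
Proof. by split=> //; exact: rt_refl. Qed.

Lemma refines_trans P Q T : refines P Q -> refines Q T -> refines P T.
Proof.
case=> wfP VPQ LPQ EPQ dPQ [_ VQT LQT EQT dQT]; split=> //.
- by rewrite VPQ.
- by rewrite LPQ.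
- by move=> b x y /EQT /EPQ.
- exact: rt_trans dPQ dQT.
Qed.

Lemma GH_mem p : (p \in GH H') = (hrule_of p \in H').
Proof.
apply/idP/idP.
  rewrite /GH in_fsetU => /orP [] /imfsetP [h /= hH' ->]; first by case: h hH'.
  by rewrite /hrule_of /barp /hprod /= barsK; case: h hH'.
rewrite /GH in_fsetU; case: p => [[a []] s] /= hH'; apply/orP.
  by right; apply/imfsetP; exists (a, bars s); rewrite // /barp /hprod /barl /= barsK.
by left; apply/imfsetP; exists (a, s).
Qed.

Lemma hrule_of_head (p : prod E) : (hrule_of p).1 = p.1.1.
Proof. by rewrite /hrule_of; case: (p.1.2). Qed.

Definition add_edge Q a v1 v2 : gseq E U S :=
  GSeq (gV Q) (fun b x y => gE Q b x y \/ (b = a /\ x = v1 /\ y = v2)) (gL Q).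

Lemma add_edge_wf Q a v1 v2 :
  gwf Q -> gV Q v1 -> gV Q v2 -> gwf (add_edge Q a v1 v2).
Proof. by move=> wfQ V1 V2 b y z [/wfQ | [_ [-> ->]]]. Qed.

Lemma refines_add_edge Q (h : hrule E) w u :
  h \in H' -> gwf Q -> gV Q w -> gV Q u -> gpath Q w h.2 u -> ~ gE Q h.1 w u ->
  refines (add_edge Q h.1 w u) Q.
Proof.
move=> hH' wfQ Vw Vu p notE; have wf' := add_edge_wf (a := h.1) wfQ Vw Vu.
split=> //; first by move=> *; left.
by apply: rt_step; exists h => //; split=> //; exists w, u.
Qed.

Lemma refines_gstep Q (x : letter E) r v1 v2 :
  hrule_of (x, r) \in H' -> gwf Q -> gV Q v1 -> gV Q v2 -> gpath Q v1 r v2 ->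
  exists2 P, refines P Q & gstep P x v1 v2.
Proof.
move=> hH' wfQ V1 V2 p.
have [present | absent] := classic (gstep Q x v1 v2).
  by exists Q => //; exact: refines_refl.
case: x hH' absent => a [] hH' absent; last first.
  by exists (add_edge Q a v1 v2); [exact: (refines_add_edge (h := (a, r))) p absent | right].
(* a barred step ā from v1 to v2 is an a-edge from v2 to v1, via the path r̄ *)
exists (add_edge Q a v2 v1); last by right.
exact: (refines_add_edge (h := (a, bars r))) (gpath_bars p) absent.
Qed.

End Refinement.

Section Replay.
Variables (E : finType) (U : eqType) (S : countType) (H' : {fset hrule E}).
Variables (G' K : {fset prod E}).

Hypothesis inert : forall p p', p \in G' -> p \in K -> p' \in G' -> p' \notin K ->
  p'.1 \notin p.2.
Hypothesis K_horn : forall p, p \in G' -> p \in K -> hrule_of p \in H'.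

Lemma replay_deriv s t : sderiv G' s t -> forall (Q : gseq E U S) w u,
  gwf Q -> gV Q w -> gpath Q w t u ->
  exists t' P, [/\ sderiv (G' `\` K) s t', gpath P w t' u & refines H' P Q].
Proof.
move=> d; elim: (clos_rt_rt1n _ _ _ _ d) => {d s t} [s | s s1 t step _ IH]
  Q w u wfQ Vw p.
  by exists s, Q; split=> //; [exact: rt_refl | exact: refines_refl].
case: (IH Q w u wfQ Vw p) => t1 [P1 [d1 p1 refP1]].
case: step => A [B [x [r [xr [-> Es1]]]]].
case xK: ((x, r) \in K); last first.
  exists t1, P1; split=> //; apply: rt_trans d1; apply: rt_step.
  by exists A, B, x, r; rewrite in_fsetD xK xr.
have frozen : forall q, q \in G' `\` K -> q.1 \notin r.
  by move=> q; rewrite in_fsetD => /andP [qK qG]; exact: inert xr xK qG qK.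
rewrite Es1 in d1; case: (sderiv_frozen frozen d1) => tA [tB [Et dA dB]].
rewrite Et in p1; case/gpath_cat: p1 => v1 [pA /gpath_cat [v2 [pr pB]]].
case: (refP1) => wfP1 VP1 _ _ _.
have Vv1 : gV P1 v1 by apply: (gpath_V wfP1 pA); rewrite VP1.
have Vv2 : gV P1 v2 := gpath_V wfP1 pr Vv1.
case: (refines_gstep (K_horn xr xK) wfP1 Vv1 Vv2 pr) => P refP xstep.
case: (refP) => _ _ _ sub _.
exists (tA ++ x :: tB), P; split; last exact: refines_trans refP refP1.
  exact: sderiv_cat dA (sderiv_cat (rt_refl _ _ [:: x]) dB).
apply/gpath_cat; exists v1; split; first exact: gpath_sub pA.
by exists v2; split=> //; exact: gpath_sub pB.
Qed.

End Replay.

Section Fracture.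
Variables (E : finType) (U : eqType) (S : countType).
Variables (C : constraint E U) (H' : {fset hrule E}).
Hypothesis frac : fracturable (Gi C) H'.

Lemma Gi_sub e p : e \in cE C -> p \in e.2.1 -> p \in Gi C.
Proof.
rewrite /Gi; elim: (cE C) => //= e' es IH.
by rewrite inE in_fsetU => /orP [/eqP -> -> | /IH /[apply] ->]; rewrite ?orbT.
Qed.

(** Fracturability makes G(H') inert inside G(i(C,R)): a production in
    G(H') whose body mentions the head of a production outside G(H') would
    give a dependency edge leaving H'. *)
Lemma GH_inert p p' : p \in Gi C -> p \in GH H' -> p' \in Gi C -> p' \notin GH H' ->
  p'.1 \notin p.2.
Proof.
case: frac => _ closed Gp; rewrite !GH_mem => hp Gp' hp'; apply/negP => p'p.
apply: (closed _ (hrule_of p') hp _ hp'); first by exists p'.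
have [same | diff] := eqVneq (hrule_of p) (hrule_of p'); first by rewrite -same hp in hp'.
apply: rt_step; split; [by exists p | by exists p' | split; first exact/eqP].
rewrite /hprod /= hrule_of_head; move: (mem_unbarred p'p).
by rewrite /hrule_of; case: (p.1.2); rewrite /= ?barsK; tauto.
Qed.

Lemma replay_edges (es : seq (U * U * ({fset prod E} * E))) (Q : gseq E U S) :
  is_constraint C -> {subset es <= cE C} -> gwf Q ->
  (forall w, w \in cV C -> gV Q w) ->
  (forall e, e \in es ->
     exists2 t, sderiv e.2.1 [:: (e.2.2, false)] t & gpath Q e.1.1 t e.1.2) ->
  exists2 P, refines H' P Q &
    forall e, e \in es ->
      exists2 t, sderiv (e.2.1 `\` GH H') [:: (e.2.2, false)] t & gpath P e.1.1 t e.1.2.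
Proof.
move=> [[[_ _ ends _ _] _] _] sub wfQ VQ; elim: es sub => [|e es IH] sub edges.
  by exists Q => //; exact: refines_refl.
have eC : e \in cE C by apply: sub; rewrite inE eqxx.
case: IH => [x xes | x xes | P1 refP1 edges1].
- by apply: sub; rewrite inE xes orbT.
- by apply: edges; rewrite inE xes orbT.
case: (edges e (mem_head _ _)) => t d p.
case: (refP1) => wfP1 VP1 _ subP1 _.
have Vw : gV P1 e.1.1 by rewrite VP1; apply: VQ; case: (ends e eC).
have inert q q' : q \in e.2.1 -> q \in GH H' -> q' \in e.2.1 -> q' \notin GH H' ->
    q'.1 \notin q.2.
  by move=> Gq Kq Gq' Kq'; apply: GH_inert; rewrite // (Gi_sub eC).
have K_horn q : q \in e.2.1 -> q \in GH H' -> hrule_of q \in H' by rewrite GH_mem.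
case: (replay_deriv inert K_horn d wfP1 Vw (gpath_sub subP1 p)) => t' [P [d' p' refP]].
exists P; first exact: refines_trans refP refP1.
case: (refP) => _ _ _ subP _.
move=> e'; rewrite inE => /orP [/eqP -> | /edges1 [t1 d1 p1]]; first by exists t'.
by exists t1; last exact: (gpath_sub subP).
Qed.

End Fracture.

Theorem mainTheorem8
  (E : finType) (HE : 0 < #|E|) (U : eqType) (S : countType)
  (S_inf : exists f : nat -> S, injective f)
  (C : constraint E U) (R : seqconstr U S)
  (HC : is_constraint C)
  (H' : {fset hrule E}) (Hfr : fracturable (Gi C) H') :
  forall G : gseq E U S, init_concl C R G ->
    exists2 G0 : gseq E U S,
      init_concl (fracture C (GH H')) R G0 &
      clos_refl_trans (gseq E U S) (horn_step H') G0 G.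
Proof.
move=> G [wfG [VG edgesG] [l perm_l Rl]].
have [P [wfP VP LP _ derivP] edgesP] := replay_edges Hfr HC (fun e h => h) wfG VG edgesG.
exists P => //; split=> //.
- split=> [w /VG | _ /mapP [e eC ->]]; first by rewrite VP.
  exact: edgesP.
- by exists l; rewrite /gDelta ?VP LP.
Qed.
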